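(* Let $A\in\mathbb{R}^{m\times n}$ with $m>n$, and let $A=U_A\Sigma_AV_A^T$ be its economy SVD, $U_A\in\mathbb{R}^{m\times n}$ with orthonormal columns. Let $\lambda>0$. Let $X\in\mathbb{R}^{s\times m}$ with $m>s\geq n$ be a matrix such that, for some $0<\epsilon<1$, $$1-\epsilon<\sigma_{\min}(XU_A)\le\sigma_{\max}(XU_A)<1+\epsilon .$$ Suppose $R\in\mathbb{R}^{n\times n}$ is an upper triangular matrix such that $R^TR=A^TX^TXA+\lambda I_n$. Then $$\kappa_2(BR^{-1})\le\frac{1+\epsilon}{1-\epsilon},\qquad\text{where } B=\begin{bmatrix}A\\ \sqrt{\lambda}I_n\end{bmatrix}\in\mathbb{R}^{(m+n)\times n}.$$
   Context: $\sigma_{\min},\sigma_{\max}$ denote the smallest and largest singular values (of an $s\times n$ matrix, among its $n$ singular values), and $\kappa_2(M)=\sigma_{\max}(M)/\sigma_{\min}(M)$ is the spectral condition number of a full-column-rank matrix $M$. Note $R$ is invertible since $R^TR$ is positive definite. *)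

From HB Require Import structures.
From mathcomp Require Import all_boot all_order all_algebra.
From mathcomp Require Import boolp classical_sets reals.
Set Implicit Arguments. Unset Strict Implicit. Unset Printing Implicit Defensive.
Import Order.TTheory GRing.Theory Num.Theory.
Local Open Scope ring_scope.
Local Open Scope classical_set_scope.

(* sigma is a singular value of M : s x n  iff sigma >= 0 and sigma^2 is an
   eigenvalue of M^T M (the n singular values, ignoring multiplicity). *)
Definition singular_values (R : realType) (s n : nat) (M : 'M[R]_(s, n)) : set R :=
  [set sg | 0 <= sg /\ eigenvalue (M^T *m M) (sg ^+ 2)].

Definition sigma_max (R : realType) (s n : nat) (M : 'M[R]_(s, n)) : R :=
  sup (singular_values M).
Definition sigma_min (R : realType) (s n : nat) (M : 'M[R]_(s, n)) : R :=
  inf (singular_values M).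

Definition kappa2 (R : realType) (s n : nat) (M : 'M[R]_(s, n)) : R :=
  sigma_max M / sigma_min M.

Definition upper_triangular (R : realType) (n : nat) (T : 'M[R]_n) : Prop :=
  forall i j : 'I_n, (j < i)%N -> T i j = 0.

Definition is_diag (R : realType) (n : nat) (D : 'M[R]_n) : Prop :=
  forall i j : 'I_n, i != j -> D i j = 0.

Definition economy_svd (R : realType) (m n : nat) (A : 'M[R]_(m, n))
  (U : 'M[R]_(m, n)) (S : 'M[R]_n) (V : 'M[R]_n) : Prop :=
  [/\ U^T *m U = 1%:M, is_diag S, (forall i, 0 <= S i i),
      V^T *m V = 1%:M & A = U *m S *m V^T].

From HB Require Import structures.
From mathcomp Require Import all_boot all_order all_algebra.
From mathcomp Require Import boolp classical_sets reals.
From mathcomp Require Import sesquilinear spectral complex lra.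
Import Order.TTheory GRing.Theory Num.Theory.
Set Implicit Arguments. Unset Strict Implicit. Unset Printing Implicit Defensive.
Local Open Scope ring_scope.

(* With w := SA VA^T z one has |T z|^2 = |X UA w|^2 + lambda |z|^2 and
   |B z|^2 = |w|^2 + lambda |z|^2.  Since the singular values of X UA lie in
   [1 - eps, 1 + eps], the Rayleigh quotient of its Gram matrix gives
   (1 - eps)^2 |w|^2 <= |X UA w|^2 <= (1 + eps)^2 |w|^2, so with x = T z every
   singular value of B T^-1 lies in [1 / (1 + eps), 1 / (1 - eps)].  The
   Rayleigh bounds for real symmetric matrices are obtained from the spectral
   theorem for normal complex matrices. *)

Section NormalMatrices.
Local Open Scope sesquilinear_scope.
Variable C : numClosedFieldType.

Lemma hermitian_eigenvalue_real n (H : 'M[C]_n) c :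
  H \is hermsymmx -> eigenvalue H c -> c \is Num.real.
Proof.
move=> /is_hermitianmxP; rewrite expr0 scale1r => Hh /eigenvalueP [v Hv v0].
have q0 : 0 < (v *m v ^t*) 0 0 by rewrite -dotmxE (dnorm_gt0 (@dotmx C n)).
have E : c * (v *m v ^t*) 0 0 = (v *m H *m v ^t*) 0 0.
  by rewrite Hv -scalemxAl [RHS]mxE.
apply/CrealP; apply: (mulIf (lt0r_neq0 q0)).
have q_real : ((v *m v ^t*) 0 0)^* = (v *m v ^t*) 0 0.
  by apply/CrealP; rewrite realE (ltW q0).
have form_real : ((v *m H *m v ^t*) 0 0)^* = (v *m H *m v ^t*) 0 0.
  have -> : forall M : 'M[C]_1, (M 0 0)^* = M ^t* 0 0 by move=> M; rewrite !mxE.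
  by rewrite !trmx_mul !map_mxM trmxCK -Hh mulmxA.
by rewrite -[in LHS]q_real -rmorphM /= E form_real.
Qed.

Lemma eigenvalue_spectral_diag n (H : 'M[C]_n) i :
  H \is normalmx -> eigenvalue H (spectral_diag H 0 i).
Proof.
move=> /orthomx_spectralP HE; set P := spectralmx H in HE.
have Punit : P \in unitmx by apply: spectral_unit.
apply/eigenvalueP; exists (row i P); last first.
  apply/eqP => Pi0; have /rowP/(_ i) := congr1 (row i) (mulmxV Punit).
  by rewrite row_mul Pi0 mul0mx !mxE eqxx => /eqP; rewrite eq_sym oner_eq0.
by rewrite {1}HE !mulmxA -row_mul mulmxV // row1 -rowE row_diag_mx -scalemxAl -rowE.
Qed.

Lemma normal_form_bounds n (H : 'M[C]_n) (a b : C) :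
  H \is normalmx -> (forall c, eigenvalue H c -> a <= c <= b) ->
  forall u : 'rV[C]_n,
  a * (u *m u ^t*) 0 0 <= (u *m H *m u ^t*) 0 0 <= b * (u *m u ^t*) 0 0.
Proof.
move=> Hn Hab u.
have /orthomx_spectralP HE := Hn; set P := spectralmx H in HE.
set d := spectral_diag H in HE.
have PinvE : invmx P = P ^t* by apply/invmx_unitary/spectral_unitarymx.
set y := u *m P ^t*.
have yE : y ^t* = P *m u ^t* by rewrite /y trmx_mul map_mxM trmxCK.
have normE : (u *m u ^t*) 0 0 = \sum_j y 0 j * (y 0 j)^*.
  have PtP : P ^t* *m P = 1%:M by rewrite -PinvE mulVmx ?spectral_unit.
  have -> : u *m u ^t* = y *m y ^t* by rewrite yE mulmxA -(mulmxA u) PtP mulmx1.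
  by rewrite mxE; apply: eq_bigr => j _; rewrite !mxE.
have formE : (u *m H *m u ^t*) 0 0 = \sum_j d 0 j * (y 0 j * (y 0 j)^*).
  rewrite HE PinvE !mulmxA -/y -mulmxA -yE mxE.
  by apply: eq_bigr => j _; rewrite mul_mx_diag !mxE mulrCA mulrA.
have y_ge0 j : 0 <= y 0 j * (y 0 j)^* by apply: mul_conjC_ge0.
rewrite normE formE !mulr_sumr; apply/andP; split; apply: ler_sum => j _;
  by apply: ler_wpM2r => //; case/andP: (Hab _ (eigenvalue_spectral_diag j Hn)).
Qed.
End NormalMatrices.

Section RealSymmetric.
Local Open Scope sesquilinear_scope.
Variable R : rcfType.
Local Notation toC := (real_complex R).

Lemma real_complex_is_real (x : R) : toC x \is Num.real.
Proof. by apply/complex_realP; exists x. Qed.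

Lemma eigenvalue_map_complex n (G : 'M[R]_n) (c : R[i]) :
  c \is Num.real -> eigenvalue (map_mx toC G) c -> eigenvalue G (complex.Re c).
Proof.
move=> c_real; rewrite eigenvalue_root_char -map_char_poly -(RRe_real c_real).
by rewrite fmorph_root -eigenvalue_root_char.
Qed.

Lemma symmetric_form_bounds n (G : 'M[R]_n) (a b : R) :
  G^T = G -> (forall c, eigenvalue G c -> a <= c <= b) ->
  forall x : 'cV[R]_n,
  a * (x^T *m x) 0 0 <= (x^T *m G *m x) 0 0 <= b * (x^T *m x) 0 0.
Proof.
move=> Gsym Hab x; set Gc := map_mx toC G.
have Gc_herm : Gc \is hermsymmx.
  apply: realsym_hermsym; last by apply/mxOverP => i j; rewrite mxE real_complex_is_real.
  by apply/is_hermitianmxP; rewrite expr0 scale1r map_mx_id // /Gc map_trmx Gsym.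
have Gc_bounds c : eigenvalue Gc c -> toC a <= c <= toC b.
  move=> Hc; have c_real := hermitian_eigenvalue_real Gc_herm Hc.
  rewrite -(RRe_real c_real) !lecR; exact/Hab/eigenvalue_map_complex.
set u := (map_mx toC x)^T.
have uE : u ^t* = map_mx toC x.
  by rewrite trmxK; apply/matrixP => i j; rewrite !mxE conj_Creal ?real_complex_is_real.
have toC_form (M : 'M[R]_n) : toC ((x^T *m M *m x) 0 0) = (u *m map_mx toC M *m u ^t*) 0 0.
  by rewrite uE /u map_trmx -!map_mxM [RHS]mxE.
have := normal_form_bounds (hermitian_normalmx Gc_herm) Gc_bounds u.
have toC_norm : toC ((x^T *m x) 0 0) = (u *m u ^t*) 0 0.
  by rewrite uE /u map_trmx -map_mxM [RHS]mxE.
by rewrite -toC_norm -toC_form -!rmorphM !lecR.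
Qed.
End RealSymmetric.

Lemma eigenvalue_le_sum_norm (F : realFieldType) n (G : 'M[F]_n) c :
  eigenvalue G c -> `|c| <= \sum_i \sum_j `|G i j|.
Proof.
move=> /eigenvalueP [v Hv v0].
have [j0 vj0] : exists j, v 0 j != 0.
  apply/existsP; apply: contraR v0 => /existsPn vj0; apply/eqP/rowP => j.
  by rewrite mxE; apply/eqP; move: (vj0 j); rewrite negbK.
have [k _ kmax] := @arg_maxP _ _ _ j0 xpredT (fun i => `|v 0 i|) isT.
have vk_gt0 : 0 < `|v 0 k| by apply: lt_le_trans (kmax j0 isT); rewrite normr_gt0.
have ck : c * v 0 k = \sum_i v 0 i * G i k.
  by have /rowP /(_ k) := Hv; rewrite !mxE => <-.
rewrite -(ler_pM2r vk_gt0) -normrM ck; apply: le_trans (ler_norm_sum _ _ _) _.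
rewrite mulr_suml; apply: ler_sum => i _; rewrite normrM mulrC.
apply: ler_pM => //; last exact: kmax.
by rewrite (bigD1 k) //= ler_wpDr // sumr_ge0.
Qed.

Lemma unitmx_of_mulmx_eq0 (F : fieldType) n (T : 'M[F]_n) :
  (forall z : 'cV_n, T *m z = 0 -> z = 0) -> T \in unitmx.
Proof.
move=> Tinj; apply/negPn/negP => T_nunit.
have : kermx T^T != 0 by rewrite kermx_eq0 row_free_unit unitmx_tr.
case/rowV0Pn => v /sub_kermxP vT; apply/negP; rewrite negbK -trmx_eq0.
by apply/eqP/Tinj; rewrite -(trmxK T) -trmx_mul vT trmx0.
Qed.

Section SingularValues.
Variable R : realType.

Definition sqnorm k (x : 'cV[R]_k) : R := (x^T *m x) 0 0.

Lemma sqnormE k (x : 'cV[R]_k) : sqnorm x = \sum_i x i 0 ^+ 2.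
Proof. by rewrite /sqnorm mxE; apply: eq_bigr => i _; rewrite mxE expr2. Qed.

Lemma sqnorm_ge0 k (x : 'cV[R]_k) : 0 <= sqnorm x.
Proof. by rewrite sqnormE sumr_ge0 // => i _; rewrite sqr_ge0. Qed.

Lemma sqnorm_gt0 k (x : 'cV[R]_k) : x != 0 -> 0 < sqnorm x.
Proof.
move=> x0; rewrite lt_def sqnorm_ge0 andbT; apply: contra x0 => /eqP.
rewrite sqnormE => /psumr_eq0P x_eq0; apply/eqP/matrixP => i j.
rewrite (ord1 j) mxE; apply/eqP; rewrite -sqrf_eq0; apply/eqP/x_eq0 => // l _.
exact: sqr_ge0.
Qed.

Lemma sqnorm_mul m n (N : 'M[R]_(m, n)) (x : 'cV[R]_n) :
  sqnorm (N *m x) = (x^T *m (N^T *m N) *m x) 0 0.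
Proof. by rewrite /sqnorm trmx_mul !mulmxA. Qed.

Lemma sqnorm_gram_shift m p n (M : 'M[R]_(m, n)) (N : 'M[R]_(p, n)) l :
  M^T *m M = N^T *m N + l%:M ->
  forall x, sqnorm (M *m x) = sqnorm (N *m x) + l * sqnorm x.
Proof.
move=> MN x; rewrite !sqnorm_mul MN mulmxDr mulmxDl mxE mul_mx_scalar.
by rewrite -scalemxAl [X in _ + X]mxE.
Qed.

Lemma sqnorm_isometry m n (U : 'M[R]_(m, n)) (x : 'cV[R]_n) :
  U^T *m U = 1%:M -> sqnorm (U *m x) = sqnorm x.
Proof. by move=> UU; rewrite sqnorm_mul UU mulmx1. Qed.

Lemma gram_eigenvalue_sqnorm s n (W : 'M[R]_(s, n)) c (v : 'rV[R]_n) :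
  v *m (W^T *m W) = c *: v -> c * sqnorm v^T = sqnorm (W *m v^T).
Proof.
by move=> Hv; rewrite sqnorm_mul /sqnorm trmxK Hv -scalemxAl [in RHS]mxE.
Qed.

Lemma gram_eigenvalue_ge0 s n (W : 'M[R]_(s, n)) c :
  eigenvalue (W^T *m W) c -> 0 <= c.
Proof.
move=> /eigenvalueP [v Hv v0].
have v_gt0 : 0 < sqnorm v^T by rewrite sqnorm_gt0 // trmx_eq0.
by rewrite -(pmulr_lge0 _ v_gt0) (gram_eigenvalue_sqnorm Hv) sqnorm_ge0.
Qed.

Lemma singular_values_bounded s n (W : 'M[R]_(s, n)) :
  has_ubound (singular_values W).
Proof.
set K := \sum_i \sum_j `|(W^T *m W) i j|.
exists (1 + K) => sg [sg_ge0 Hsg].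
have sg2_le : sg ^+ 2 <= K by apply: le_trans (eigenvalue_le_sum_norm Hsg); exact: ler_norm.
have K_ge0 : 0 <= K by apply: le_trans sg2_le; exact: sqr_ge0.
have [sg_le1|sg_gt1] := lerP sg 1; first by apply: le_trans sg_le1 _; rewrite lerDl.
have sg_le : sg <= K by apply: le_trans sg2_le; rewrite expr2 ler_peMr // ltW.
by apply: le_trans sg_le _; rewrite lerDr.
Qed.

Lemma singular_value_sigma s n (W : 'M[R]_(s, n)) sg :
  singular_values W sg -> sigma_min W <= sg <= sigma_max W.
Proof.
move=> Wsg; apply/andP; split.
  by apply: ge_inf => //; exists 0 => x [].
exact/ub_le_sup/Wsg/singular_values_bounded.
Qed.

Lemma sqnorm_mul_bounds s n (W : 'M[R]_(s, n)) (a b : R) :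
  0 <= a -> (forall sg, singular_values W sg -> a <= sg <= b) ->
  forall x, a ^+ 2 * sqnorm x <= sqnorm (W *m x) <= b ^+ 2 * sqnorm x.
Proof.
move=> a_ge0 Wab x; rewrite sqnorm_mul.
apply: symmetric_form_bounds; first by rewrite trmx_mul trmxK.
move=> c Hc; have c_ge0 := gram_eigenvalue_ge0 Hc.
have /Wab /andP[a_le b_ge] : singular_values W (Num.sqrt c).
  by split; rewrite ?sqrtr_ge0 ?sqr_sqrtr.
rewrite -(sqr_sqrtr c_ge0) !ler_pXn2r ?a_le ?b_ge //.
all: by rewrite nnegrE ?sqrtr_ge0 // (le_trans (sqrtr_ge0 c) b_ge).
Qed.

Lemma singular_values_of_sqnorm_bounds s n (W : 'M[R]_(s, n)) (a b : R) :
  0 <= a -> 0 <= b ->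
  (forall x, a ^+ 2 * sqnorm x <= sqnorm (W *m x) <= b ^+ 2 * sqnorm x) ->
  forall sg, singular_values W sg -> a <= sg <= b.
Proof.
move=> a_ge0 b_ge0 Wab sg [sg_ge0 /eigenvalueP [v Hv v0]].
have v_gt0 : 0 < sqnorm v^T by rewrite sqnorm_gt0 // trmx_eq0.
have := Wab v^T; rewrite -(gram_eigenvalue_sqnorm Hv) !ler_pM2r //.
by rewrite !ler_pXn2r.
Qed.

Lemma kappa2_le m n (M : 'M[R]_(m, n)) (a b : R) :
  0 < a -> a <= b -> (forall sg, singular_values M sg -> a <= sg <= b) ->
  kappa2 M <= b / a.
Proof.
move=> a_gt0 ab Mab; have b_gt0 := lt_le_trans a_gt0 ab.
rewrite /kappa2 /sigma_max /sigma_min.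
(* Without singular values, [sup set0 = 0] makes [kappa2 M] vanish. *)
have [[sg Msg]|M0] := pselect (singular_values M !=set0)%classic; last first.
  have -> : singular_values M = set0.
    by apply/seteqP; split => x // Mx; exfalso; apply: M0; exists x.
  by rewrite sup0 mul0r divr_ge0 // ltW.
have sup_le : sup (singular_values M) <= b.
  by apply: ge_sup; [exists sg | move=> x /Mab /andP[]].
have inf_ge : a <= inf (singular_values M).
  by apply: lb_le_inf; [exists sg | move=> x /Mab /andP[]].
have inf_gt0 := lt_le_trans a_gt0 inf_ge.
rewrite ler_pdivrMr // mulrAC ler_pdivlMr //.
have sup_ge0 : 0 <= sup (singular_values M).
  by apply: le_trans (proj1 Msg) (ub_le_sup (singular_values_bounded M) Msg).
by rewrite ler_pM // ltW.
Qed.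

End SingularValues.

Section Preconditioner.
Variables (R : realType) (m n s : nat).
Variables (A UA : 'M[R]_(m, n)) (SA VA : 'M[R]_n) (X : 'M[R]_(s, m)) (T : 'M[R]_n).
Variables (lambda eps : R).
Hypotheses (UA_orth : UA^T *m UA = 1%:M) (A_svd : A = UA *m SA *m VA^T).
Hypotheses (lambda_gt0 : 0 < lambda) (eps_gt0 : 0 < eps) (eps_lt1 : eps < 1).
Hypothesis XUA_sv : forall sg, singular_values (X *m UA) sg -> 1 - eps <= sg <= 1 + eps.
Hypothesis T_gram : T^T *m T = A^T *m X^T *m X *m A + lambda%:M.

Let B := col_mx A ((Num.sqrt lambda)%:M : 'M[R]_n).

Let A_mulE k (z : 'M[R]_(n, k)) : A *m z = UA *m (SA *m VA^T *m z).
Proof. by rewrite A_svd !mulmxA. Qed.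

Lemma sqnorm_mulT z :
  sqnorm (T *m z) = sqnorm (X *m UA *m (SA *m VA^T *m z)) + lambda * sqnorm z.
Proof.
have XA_gram : T^T *m T = (X *m A)^T *m (X *m A) + lambda%:M.
  by rewrite T_gram trmx_mul !mulmxA.
by rewrite (sqnorm_gram_shift XA_gram) -mulmxA A_mulE mulmxA.
Qed.

Lemma sqnorm_mulB z : sqnorm (B *m z) = sqnorm (SA *m VA^T *m z) + lambda * sqnorm z.
Proof.
have B_gram : B^T *m B = A^T *m A + lambda%:M.
  by rewrite tr_col_mx mul_row_col tr_scalar_mx -scalar_mxM -expr2 sqr_sqrtr ?ltW.
by rewrite (sqnorm_gram_shift B_gram) A_mulE sqnorm_isometry.
Qed.

Lemma unitmxT : T \in unitmx.
Proof.
apply: unitmx_of_mulmx_eq0 => z Tz0; apply/eqP/negPn/negP => /sqnorm_gt0 z_gt0.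
have := sqnorm_mulT z; rewrite Tz0 /sqnorm trmx0 mul0mx mxE => /esym/eqP; apply/negP.
by rewrite gt_eqF // ltr_pwDr ?mulr_gt0 // -/(sqnorm _) sqnorm_ge0.
Qed.

Lemma sqnorm_mul_BTinv_bounds x :
  (1 - eps) ^+ 2 * sqnorm (B *m invmx T *m x) <= sqnorm x
  <= (1 + eps) ^+ 2 * sqnorm (B *m invmx T *m x).
Proof.
have e1_ge0 : 0 <= 1 - eps by rewrite subr_ge0 ltW.
have e1_le1 : 1 - eps <= 1 by rewrite lerBlDr lerDl ltW.
have e2_ge1 : 1 <= 1 + eps by rewrite lerDl ltW.
set z := invmx T *m x; have -> : x = T *m z by rewrite mulKVmx ?unitmxT.
rewrite -mulmxA mulKmx ?unitmxT // sqnorm_mulT sqnorm_mulB.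
set w := SA *m VA^T *m z; have /andP[] := sqnorm_mul_bounds e1_ge0 XUA_sv w.
have : 0 <= lambda * sqnorm z by rewrite mulr_ge0 ?sqnorm_ge0 ?ltW.
move: (lambda * sqnorm z) (sqnorm (X *m UA *m w)) (sqnorm w) => r p q r_ge0 pq qp.
have r_le : (1 - eps) ^+ 2 * r <= r by rewrite ler_piMl // exprn_ile1.
have r_ge : r <= (1 + eps) ^+ 2 * r by rewrite ler_peMl // exprn_ege1.
by apply/andP; split; lra.
Qed.

Lemma singular_values_BTinv sg :
  singular_values (B *m invmx T) sg -> (1 + eps)^-1 <= sg <= (1 - eps)^-1.
Proof.
have e1_gt0 : 0 < 1 - eps by rewrite subr_gt0.
have e2_gt0 : 0 < 1 + eps by rewrite ltr_wpDr // ltW.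
apply: singular_values_of_sqnorm_bounds; rewrite ?invr_ge0 ?ltW // => x.
have /andP[lo hi] := sqnorm_mul_BTinv_bounds x.
by rewrite !exprVn ler_pdivlMl ?ler_pdivrMl ?exprn_gt0 // hi lo.
Qed.

End Preconditioner.

Unset Implicit Arguments.

Theorem lemma2p1 (R : realType) (m n s : nat)
  (A : 'M[R]_(m, n)) (UA : 'M[R]_(m, n)) (SA VA : 'M[R]_n)
  (lambda eps : R) (X : 'M[R]_(s, m)) (T : 'M[R]_n) :
  (n < m)%N -> economy_svd A UA SA VA -> 0 < lambda ->
  (s < m)%N -> (n <= s)%N ->
  0 < eps -> eps < 1 ->
  1 - eps < sigma_min (X *m UA) -> sigma_max (X *m UA) < 1 + eps ->
  upper_triangular T ->
  T^T *m T = A^T *m X^T *m X *m A + lambda%:M ->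
  kappa2 (col_mx A ((Num.sqrt lambda)%:M : 'M[R]_n) *m invmx T)
    <= (1 + eps) / (1 - eps).
Proof.
move=> _ [UA_orth _ _ _ A_svd] l_gt0 _ _ e_gt0 e_lt1 Hmin Hmax _ T_gram.
have XUA_sv sg : singular_values (X *m UA) sg -> 1 - eps <= sg <= 1 + eps.
  case/singular_value_sigma/andP => min_le le_max.
  by rewrite (ltW (lt_le_trans Hmin min_le)) (ltW (le_lt_trans le_max Hmax)).
have BTinv_sv := singular_values_BTinv UA_orth A_svd l_gt0 e_gt0 e_lt1 XUA_sv T_gram.
have inv_le : (1 + eps)^-1 <= (1 - eps)^-1 by rewrite lef_pV2 ?posrE; lra.
apply: le_trans (kappa2_le _ inv_le BTinv_sv) _; first by rewrite invr_gt0; lra.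
by rewrite invrK mulrC.
Qed.
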